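(* Let $A=\Bbbk_{-1}[u,v]$ and $G=G_{n,k}$, where $n,k$ are positive coprime integers with $k\not\equiv2\pmod4$. Then the invariant ring $A^G$ is commutative if and only if $n$ or $k$ is even.
   Context: $\Bbbk$ is algebraically closed of characteristic $0$; $\Bbbk_{-1}[u,v]=\Bbbk\langle u,v\rangle/(vu+uv)$; matrices $\begin{pmatrix}a&b\\c&d\end{pmatrix}$ act by $u\mapsto au+cv$, $v\mapsto bu+dv$. With $\omega$ a primitive $(2nk)$th root of unity, $G_{n,k}$ is generated by $\mathrm{diag}(\omega^{2k},\omega^{-2k})$ and $\begin{pmatrix}0&\omega^n\\\omega^n&0\end{pmatrix}$. $A^G=\{a\in A: g\cdot a=a\ \forall g\in G\}$. *)

From HB Require Import structures.
From mathcomp Require Import all_boot all_order all_algebra.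
Set Implicit Arguments. Unset Strict Implicit. Unset Printing Implicit Defensive.
Import Order.TTheory GRing.Theory.
Local Open Scope ring_scope.

(* The skew polynomial ring k_{-1}[u,v] = k<u,v>/(vu+uv) is modelled on its
   k-basis of ordered monomials u^i v^j: an element a is stored as a
   bivariate polynomial a : {poly {poly K}} whose coefficient of u^i v^j is
   (a`_i)`_j.  Multiplication is the skew one:
     (u^i v^j)(u^k v^l) = (-1)^(j*k) u^(i+k) v^(j+l). *)

Section Skew.
Variable K : fieldType.

Definition skA := {poly {poly K}}.

Definition skcoef (a : skA) (i j : nat) : K := (a`_i)`_j.

Definition skmon (i j : nat) : skA := ('X^j)%:P * 'X^i.

Definition skscale (c : K) (a : skA) : skA := (c%:P)%:P * a.

Definition skmul (a b : skA) : skA :=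
  \sum_(i < size a) \sum_(j < size a`_i)
   \sum_(k < size b) \sum_(l < size b`_k)
     skscale ((-1) ^+ (j * k) * skcoef a i j * skcoef b k l) (skmon (i + k) (j + l)).

Definition skone : skA := skmon 0 0.

Definition skpow (x : skA) (m : nat) : skA := iter m (skmul x) skone.

Definition sku : skA := skmon 1 0.
Definition skv : skA := skmon 0 1.

(* The matrix g = [[a b];[c d]] acts by the algebra automorphism
   u |-> a u + c v, v |-> b u + d v, extended multiplicatively:
   g . (sum c_ij u^i v^j) = sum c_ij (g.u)^i (g.v)^j. *)
Definition act (g : 'M[K]_2) (a : skA) : skA :=
  let gu := skscale (g 0 0) sku + skscale (g 1 0) skv in
  let gv := skscale (g 0 1) sku + skscale (g 1 1) skv in
  \sum_(i < size a) \sum_(j < size a`_i)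
     skscale (skcoef a i j) (skmul (skpow gu i) (skpow gv j)).

Definition genD (n k : nat) (w : K) : 'M[K]_2 :=
  \matrix_(i < 2, j < 2)
    (if (i == 0) && (j == 0) then w ^+ (2 * k)
     else if (i == 1) && (j == 1) then (w ^+ (2 * k))^-1 else 0).

Definition genT (n k : nat) (w : K) : 'M[K]_2 :=
  \matrix_(i < 2, j < 2) (if i == j then 0 else w ^+ n).

Inductive inG (n k : nat) (w : K) : 'M[K]_2 -> Prop :=
  | inG1 : inG n k w 1%:M
  | inGD : inG n k w (genD n k w)
  | inGT : inG n k w (genT n k w)
  | inGM g h : inG n k w g -> inG n k w h -> inG n k w (g *m h)
  | inGV g : inG n k w g -> inG n k w (invmx g).

Definition invariant (n k : nat) (w : K) (a : skA) : Prop :=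
  forall g, inG n k w g -> act g a = a.

Definition invariant_ring_commutative (n k : nat) (w : K) : Prop :=
  forall a b : skA, invariant n k w a -> invariant n k w b ->
    skmul a b = skmul b a.

End Skew.

From Pilot Require Import Defs.
From HB Require Import structures.
From mathcomp Require Import all_boot all_order all_algebra.
From mathcomp Require Import ring zify.
Set Implicit Arguments. Unset Strict Implicit. Unset Printing Implicit Defensive.
Import Order.TTheory GRing.Theory.
Local Open Scope ring_scope.

(* - If n or k is even, every invariant is balanced: only monomials u^p v^q
     with p = q (mod 2) occur in it.  For even n this follows from invariance
     under diag(l, l^-1), l = w^(2k) a primitive n-th root of unity; for even
     k from applying the antidiagonal generator twice.  Balanced elements
     commute, since (u^i v^j)(u^k v^l) = (-1)^(jk) u^(i+k) v^(j+l).
   - If n and k are both odd, f = u^(nk) - v^(nk) and h = u^r v^s - u^s v^r,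
     with s = n(2k-1) and r = n(2k+1), are invariant, while the coefficient of
     u^(nk+r) v^s in fh - hf is 2 <> 0.  Invariance under all of G_{n,k} is
     obtained by exhibiting a group of "admissible" diagonal and antidiagonal
     matrices that contains both generators and fixes f and h. *)

Lemma addn_eq_sub (d j q : nat) : (d + j == q)%N = (d <= q)%N && (j == q - d)%N.
Proof.
apply/idP/andP => [/eqP <- | [dq /eqP ->]]; first by rewrite leq_addr addKn.
by rewrite subnKC.
Qed.

Section NatIndexedSums.
Variable R : pzSemiRingType.

Lemma sum_delta s q (G : nat -> R) :
  \sum_(j < s) ((j == q :> nat)%:R * G j) = (q < s)%N%:R * G q.
Proof.
case: (ltnP q s) => hq.
  rewrite (bigD1 (Ordinal hq)) //= eqxx mul1r big1 ?addr0 // => j hj.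
  by rewrite (_ : _ == q = false) ?mul0r //; apply: contraNF hj => /eqP e; apply/eqP/val_inj.
rewrite mul0r big1 // => j _.
by rewrite (_ : _ == q = false) ?mul0r //; apply/negbTE; rewrite neq_ltn (leq_trans _ hq).
Qed.

Lemma sum_delta_supp s q (G : nat -> R) : (forall j, (s <= j)%N -> G j = 0) ->
  \sum_(j < s) ((j == q :> nat)%:R * G j) = G q.
Proof. by move=> H; rewrite sum_delta; case: ltnP => h; rewrite ?mul1r // H ?mulr0. Qed.

Lemma sum_widen s m (F : nat -> R) : (forall j, (s <= j)%N -> F j = 0) ->
  (forall j, (m <= j)%N -> F j = 0) -> \sum_(j < s) F j = \sum_(j < m) F j.
Proof.
wlog sm : s m / (s <= m)%N => [hwlog Hs Hm|Hs _].
  by case: (leqP s m) => [|/ltnW] h; [|symmetry]; apply: hwlog.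
rewrite (big_ord_widen m F sm) big_mkcond; apply: eq_bigr => j _.
by case: ltnP => // hj; rewrite Hs.
Qed.

End NatIndexedSums.

Section SkewCoefficients.
Variable K : fieldType.
Local Notation mon := (skmon K).
Implicit Types a b : skA K.

Lemma skcoef_mon i j p q : skcoef (mon i j) p q = ((i == p) && (j == q))%:R.
Proof.
rewrite /skcoef /skmon coefCM coefXn eq_sym.
by case: (i == p); rewrite ?mulr1 ?mulr0 ?coefXn ?coef0 //= eq_sym.
Qed.

Lemma skcoef_scale c a p q : skcoef (skscale c a) p q = c * skcoef a p q.
Proof. by rewrite /skcoef /skscale !coefCM. Qed.

Lemma skcoefD a b p q : skcoef (a + b) p q = skcoef a p q + skcoef b p q.
Proof. by rewrite /skcoef !coefD. Qed.

Lemma skcoefN a p q : skcoef (- a) p q = - skcoef a p q.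
Proof. by rewrite /skcoef !coefN. Qed.

Lemma skcoef_sum (I : Type) (r : seq I) (P : pred I) (F : I -> skA K) p q :
  skcoef (\sum_(i <- r | P i) F i) p q = \sum_(i <- r | P i) skcoef (F i) p q.
Proof. by rewrite /skcoef !coef_sum. Qed.

Lemma skA_ext a b : (forall p q, skcoef a p q = skcoef b p q) -> a = b.
Proof. by move=> E; apply/polyP => p; apply/polyP => q; apply: E. Qed.

Lemma skcoef_size a i j : (size a <= i)%N -> skcoef a i j = 0.
Proof. by move=> h; rewrite /skcoef (nth_default 0 h) coef0. Qed.

Lemma skcoef_size_row a i j : (size (a`_i)%R <= j)%N -> skcoef a i j = 0.
Proof. by move=> h; rewrite /skcoef nth_default. Qed.

Lemma sum_coef_shift b i j p q (F : nat -> nat -> K) :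
  \sum_(k < size b) \sum_(l < size b`_k)
    ((i + k == p)%N && (j + l == q)%N)%:R * (F k l * skcoef b k l) =
  ((i <= p) && (j <= q))%N%:R * (F (p - i)%N (q - j)%N * skcoef b (p - i) (q - j)).
Proof.
transitivity (((i <= p) && (j <= q))%N%:R * \sum_(k < size b) (((k : nat) == p - i)%N%:R *
    \sum_(l < size b`_k) (((l : nat) == q - j)%N%:R * (F k l * skcoef b k l)))).
  rewrite mulr_sumr; apply: eq_bigr => k _; rewrite !mulr_sumr; apply: eq_bigr => l _ /=.
  by rewrite !addn_eq_sub -!mulnb !natrM; ring.
congr (_ * _); transitivity (\sum_(k < size b)
    (((k : nat) == p - i)%N%:R * (F k (q - j)%N * skcoef b k (q - j)))).
  apply: eq_bigr => k _; rewrite (@sum_delta_supp _ _ _ (fun l => F k l * skcoef b k l)) //.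
  by move=> l /skcoef_size_row ->; rewrite mulr0.
rewrite (@sum_delta_supp _ _ _ (fun k => F k (q - j)%N * skcoef b k (q - j))) //.
by move=> k /skcoef_size ->; rewrite mulr0.
Qed.

Lemma sum_coef_extract b p q (F : nat -> nat -> K) :
  \sum_(k < size b) \sum_(l < size b`_k)
    (((k : nat) == p) && ((l : nat) == q))%:R * (F k l * skcoef b k l) =
  F p q * skcoef b p q.
Proof.
have := @sum_coef_shift b 0 0 p q F; rewrite !subn0 /= mul1r => <-.
by apply: eq_bigr => k _; apply: eq_bigr => l _; rewrite !add0n.
Qed.

Lemma sum_support_box a P Q (F : nat -> nat -> K) :
  \sum_(i < size a) \sum_(j < size a`_i)
    ((i < P) && (j < Q))%N%:R * (skcoef a i j * F i j) =
  \sum_(i < P) \sum_(j < Q) skcoef a i j * F i j.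
Proof.
pose T i j := ((i < P) && (j < Q))%N%:R * (skcoef a i j * F i j).
transitivity (\sum_(i < size a) \sum_(j < Q) T i j).
  apply: eq_bigr => i _; apply: sum_widen => j hj; rewrite /T.
  - by rewrite skcoef_size_row // mul0r mulr0.
  - by rewrite [(j < Q)%N]ltnNge hj andbF mul0r.
transitivity (\sum_(i < P) \sum_(j < Q) T i j).
  apply: (@sum_widen _ _ _ (fun i => \sum_(j < Q) T i j)) => i hi; apply: big1 => j _.
  - by rewrite /T skcoef_size // mul0r mulr0.
  - by rewrite /T [(i < P)%N]ltnNge hi mul0r.
by apply: eq_bigr => i _; apply: eq_bigr => j _; rewrite /T !ltn_ord mul1r.
Qed.

Lemma sum_box_mon i j P Q (F : nat -> nat -> K) :
  \sum_(i0 < P) \sum_(j0 < Q) skcoef (mon i j) i0 j0 * F i0 j0 =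
  ((i < P) && (j < Q))%N%:R * F i j.
Proof.
transitivity (\sum_(i0 < P) (((i0 : nat) == i)%:R *
    \sum_(j0 < Q) (((j0 : nat) == j)%:R * F i0 j0))).
  apply: eq_bigr => i0 _; rewrite mulr_sumr; apply: eq_bigr => j0 _ /=.
  by rewrite skcoef_mon -mulnb natrM mulrA (eq_sym i) (eq_sym j).
under eq_bigr => i0 _ do rewrite sum_delta.
by rewrite (@sum_delta _ _ _ (fun i0 => (j < Q)%N%:R * F i0 j)) -mulnb natrM mulrA.
Qed.

Lemma skscale1 a : skscale 1 a = a.
Proof. by rewrite /skscale !polyC1 mul1r. Qed.

Lemma skscale0 a : skscale 0 a = 0.
Proof. by rewrite /skscale !polyC0 mul0r. Qed.

Lemma skscaleA c d a : skscale c (skscale d a) = skscale (c * d) a.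
Proof. by rewrite /skscale mulrA -!polyCM. Qed.

End SkewCoefficients.

Section SkewProduct.
Variable K : fieldType.
Local Notation mon := (skmon K).
Implicit Types a b : skA K.

Lemma skcoef_mul a b p q : skcoef (skmul a b) p q =
  \sum_(i < p.+1) \sum_(j < q.+1)
    skcoef a i j * ((-1) ^+ (j * (p - i)) * skcoef b (p - i) (q - j)).
Proof.
rewrite /skmul skcoef_sum -(@sum_support_box _ a p.+1 q.+1
  (fun i j => (-1) ^+ (j * (p - i)) * skcoef b (p - i) (q - j))); apply: eq_bigr => i _.
rewrite skcoef_sum; apply: eq_bigr => j _.
transitivity (\sum_(k < size b) \sum_(l < size b`_k) ((i + k == p)%N && (j + l == q)%N)%:R *
    ((-1) ^+ (j * k) * skcoef a i j * skcoef b k l)).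
  rewrite skcoef_sum; apply: eq_bigr => k _; rewrite skcoef_sum; apply: eq_bigr => l _.
  by rewrite skcoef_scale skcoef_mon; ring.
by rewrite (@sum_coef_shift _ b i j p q (fun k _ => (-1) ^+ (j * k) * skcoef a i j)) !ltnS; ring.
Qed.

Lemma skmulZl c a b : skmul (skscale c a) b = skscale c (skmul a b).
Proof.
apply: skA_ext => p q; rewrite skcoef_scale !skcoef_mul mulr_sumr; apply: eq_bigr => i _.
by rewrite mulr_sumr; apply: eq_bigr => j _; rewrite skcoef_scale mulrA.
Qed.

Lemma skmulZr c a b : skmul a (skscale c b) = skscale c (skmul a b).
Proof.
apply: skA_ext => p q; rewrite skcoef_scale !skcoef_mul mulr_sumr; apply: eq_bigr => i _.
by rewrite mulr_sumr; apply: eq_bigr => j _; rewrite skcoef_scale; ring.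
Qed.

Lemma skmulDl a1 a2 b : skmul (a1 + a2) b = skmul a1 b + skmul a2 b.
Proof.
apply: skA_ext => p q; rewrite skcoefD !skcoef_mul -big_split; apply: eq_bigr => i _.
by rewrite -big_split; apply: eq_bigr => j _; rewrite skcoefD mulrDl.
Qed.

Lemma skmulDr a b1 b2 : skmul a (b1 + b2) = skmul a b1 + skmul a b2.
Proof.
apply: skA_ext => p q; rewrite skcoefD !skcoef_mul -big_split; apply: eq_bigr => i _.
by rewrite -big_split; apply: eq_bigr => j _; rewrite skcoefD /=; ring.
Qed.

Lemma skmulNl a b : skmul (- a) b = - skmul a b.
Proof.
apply: skA_ext => p q; rewrite skcoefN !skcoef_mul -sumrN; apply: eq_bigr => i _.
by rewrite -sumrN; apply: eq_bigr => j _; rewrite skcoefN mulNr.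
Qed.

Lemma skmulNr a b : skmul a (- b) = - skmul a b.
Proof.
apply: skA_ext => p q; rewrite skcoefN !skcoef_mul -sumrN; apply: eq_bigr => i _.
by rewrite -sumrN; apply: eq_bigr => j _; rewrite skcoefN /=; ring.
Qed.

Lemma skmul_mon i j k l :
  skmul (mon i j) (mon k l) = skscale ((-1) ^+ (j * k)) (mon (i + k) (j + l)).
Proof.
apply: skA_ext => p q; rewrite skcoef_mul.
rewrite (@sum_box_mon _ _ _ _ _
  (fun i0 j0 => (-1) ^+ (j0 * (p - i0)) * skcoef (mon k l) (p - i0) (q - j0))).
rewrite skcoef_scale !skcoef_mon !addn_eq_sub !ltnS.
case: (leqP i p) => hi; case: (leqP j q) => hj; rewrite /= ?andbF ?mul0r ?mulr0 ?mulr0n //.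
by have [-> | nk] := eqVneq k (p - i)%N; rewrite ?mul1r /= ?mulr0 ?mul0r.
Qed.

Lemma skpow_mon x i j m : ~~ odd (i * j) ->
  skpow (skscale x (mon i j)) m = skscale (x ^+ m) (mon (i * m) (j * m)).
Proof.
move=> ij_even; elim: m => [|m IH]; first by rewrite expr0 !muln0 skscale1.
rewrite [skpow _ _.+1]/skpow iterS -/(skpow _ _) IH skmulZl skmulZr skmul_mon !skscaleA.
rewrite mulnA [(j * i)%N]mulnC -signr_odd oddM (negbTE ij_even) /= expr0 mulr1.
by rewrite -exprS !mulnS.
Qed.

Definition balanced a := forall p q, skcoef a p q != 0 -> odd p = odd q.

(* Balanced monomials u^i v^j, u^k v^l satisfy (-1)^(jk) = (-1)^(li), so they
   commute; hence so do balanced elements. *)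
Lemma balanced_comm a b : balanced a -> balanced b -> skmul a b = skmul b a.
Proof.
move=> Ha Hb; apply: skA_ext => p q; rewrite !skcoef_mul.
rewrite [RHS](reindex_inj rev_ord_inj) /=; apply: eq_bigr => i _.
rewrite [RHS](reindex_inj rev_ord_inj) /=; apply: eq_bigr => j _.
have hi : (i <= p)%N by rewrite -ltnS.
have hj : (j <= q)%N by rewrite -ltnS.
rewrite !subSS !subKn //.
have [->|/Ha ea] := eqVneq (skcoef a i j) 0; first by rewrite !(mulr0, mul0r).
have [->|/Hb eb] := eqVneq (skcoef b (p - i) (q - j)) 0; first by rewrite !(mulr0, mul0r).
by rewrite -signr_odd -[in RHS]signr_odd !oddM ea eb andbC; ring.
Qed.

End SkewProduct.

Section DiagonalActions.
Variable K : fieldType.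
Implicit Types a : skA K.

Lemma act_diag (g : 'M[K]_2) a p q : g 0 1 = 0 -> g 1 0 = 0 ->
  skcoef (act g a) p q = g 0 0 ^+ p * g 1 1 ^+ q * skcoef a p q.
Proof.
move=> g01 g10; rewrite /act; cbv zeta.
rewrite g01 g10 !skscale0 addr0 add0r skcoef_sum.
rewrite -(@sum_coef_extract _ a p q (fun i j => g 0 0 ^+ i * g 1 1 ^+ j)).
apply: eq_bigr => i _; rewrite skcoef_sum; apply: eq_bigr => j _.
rewrite /sku /skv !skpow_mon // skmulZl skmulZr skmul_mon !skscaleA !skcoef_scale skcoef_mon.
by rewrite !(mul1n, mul0n, muln0, addn0, add0n) expr0; ring.
Qed.

Lemma act_anti (g : 'M[K]_2) a p q : g 0 0 = 0 -> g 1 1 = 0 ->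
  skcoef (act g a) p q = g 1 0 ^+ q * g 0 1 ^+ p * (-1) ^+ (q * p) * skcoef a q p.
Proof.
move=> g00 g11; rewrite /act; cbv zeta.
rewrite g00 g11 !skscale0 addr0 add0r skcoef_sum.
rewrite -(@sum_coef_extract _ a q p (fun i j => g 1 0 ^+ i * g 0 1 ^+ j * (-1) ^+ (i * j))).
apply: eq_bigr => i _; rewrite skcoef_sum; apply: eq_bigr => j _.
rewrite /sku /skv !skpow_mon // skmulZl skmulZr skmul_mon !skscaleA !skcoef_scale skcoef_mon.
by rewrite !(mul1n, mul0n, muln0, addn0, add0n) andbC; ring.
Qed.

End DiagonalActions.

Section Matrices2.
Variable K : fieldType.
Implicit Types g h : 'M[K]_2.

Lemma ord2 (a : 'I_2) : a = 0 \/ a = 1.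
Proof. by case: a => [[|[|m]] h]; [left | right | by []]; apply: val_inj. Qed.

Lemma mx2_ext g h : g 0 0 = h 0 0 -> g 0 1 = h 0 1 -> g 1 0 = h 1 0 -> g 1 1 = h 1 1 ->
  g = h.
Proof.
move=> e00 e01 e10 e11; apply/matrixP => a b.
by case: (ord2 a) => ->; case: (ord2 b) => ->.
Qed.

Lemma mulmx2E g h a b : (g *m h) a b = g a 0 * h 0 b + g a 1 * h 1 b.
Proof.
rewrite !mxE big_ord_recl big_ord_recl big_ord0 addr0.
by have -> : lift ord0 (ord0 : 'I_1) = 1 :> 'I_2 by apply: val_inj.
Qed.

Lemma invmx_right g h : g *m h = 1%:M -> invmx g = h.
Proof.
move=> gh1; have [g_unit _] := mulmx1_unit gh1.
by rewrite -[h]mul1mx -(mulVmx g_unit) -mulmxA gh1 mulmx1.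
Qed.

Definition mx2 (a b c d : K) : 'M[K]_2 :=
  \matrix_(i < 2, j < 2) if i == 0 then (if j == 0 then a else b) else (if j == 0 then c else d).

Lemma mx2E a b c d : [/\ mx2 a b c d 0 0 = a, mx2 a b c d 0 1 = b,
  mx2 a b c d 1 0 = c & mx2 a b c d 1 1 = d].
Proof. by rewrite !mxE. Qed.

Lemma invmx_diag g : g 0 1 = 0 -> g 1 0 = 0 -> g 0 0 != 0 -> g 1 1 != 0 ->
  invmx g = mx2 (g 0 0)^-1 0 0 (g 1 1)^-1.
Proof.
move=> g01 g10 x0 y0; apply: invmx_right.
have [e00 e01 e10 e11] := mx2E (g 0 0)^-1 0 0 (g 1 1)^-1.
by apply: mx2_ext; rewrite mulmx2E !mxE /= ?e00 ?e01 ?e10 ?e11 ?g01 ?g10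
  !(mulr0, mul0r, addr0, add0r) ?mulfV.
Qed.

Lemma invmx_anti g : g 0 0 = 0 -> g 1 1 = 0 -> g 0 1 != 0 -> g 1 0 != 0 ->
  invmx g = mx2 0 (g 1 0)^-1 (g 0 1)^-1 0.
Proof.
move=> g00 g11 x0 y0; apply: invmx_right.
have [e00 e01 e10 e11] := mx2E 0 (g 1 0)^-1 (g 0 1)^-1 0.
by apply: mx2_ext; rewrite mulmx2E !mxE /= ?e00 ?e01 ?e10 ?e11 ?g00 ?g11
  !(mulr0, mul0r, addr0, add0r) ?mulfV.
Qed.

End Matrices2.

Section AdmissibleMatrices.
Variables (K : fieldType) (N r s : nat).
Implicit Types g h : 'M[K]_2.

Definition adm (e x y : K) :=
  [/\ x ^+ N = e, y ^+ N = e, x ^+ r * y ^+ s = 1 & x ^+ s * y ^+ r = 1].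

Lemma adm_swap e x y : adm e x y -> adm e y x.
Proof. by case=> a1 a2 a3 a4; split; rewrite // mulrC. Qed.

Lemma adm_mul e e' x y x' y' : adm e x y -> adm e' x' y' -> adm (e * e') (x * x') (y * y').
Proof.
case=> a1 a2 a3 a4 [b1 b2 b3 b4]; split; rewrite !exprMn ?a1 ?a2 ?b1 ?b2 //.
  by rewrite mulrACA a3 b3 mulr1.
by rewrite mulrACA a4 b4 mulr1.
Qed.

Lemma adm_inv e x y : adm e x y -> adm e^-1 x^-1 y^-1.
Proof. by case=> a1 a2 a3 a4; split; rewrite !exprVn -?invfM ?a1 ?a2 ?a3 ?a4 ?invr1. Qed.

Lemma adm_neq0 e x y : (0 < N)%N -> e != 0 -> adm e x y -> (x != 0) && (y != 0).
Proof.
move=> N_gt0 e_neq0 [a1 a2 _ _]; apply/andP; split; apply: contraNneq e_neq0 => z0.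
  by rewrite -a1 z0 expr0n gtn_eqF.
by rewrite -a2 z0 expr0n gtn_eqF.
Qed.

Definition admissible_mx g :=
  (g 0 1 = 0 /\ g 1 0 = 0 /\ adm 1 (g 0 0) (g 1 1)) \/
  (g 0 0 = 0 /\ g 1 1 = 0 /\ adm (-1) (g 0 1) (g 1 0)).

Lemma admissible1 : admissible_mx 1%:M.
Proof. by left; rewrite !mxE /=; do 2!split => //; split; rewrite ?expr1n ?mulr1. Qed.

Lemma admissible_mul g h : admissible_mx g -> admissible_mx h -> admissible_mx (g *m h).
Proof.
case=> [[g01 [g10 cg]] | [g00 [g11 cg]]] [[h01 [h10 ch]] | [h00 [h11 ch]]];
  rewrite /admissible_mx !mulmx2E.
- left; rewrite g01 g10 h01 h10 !(mulr0, mul0r, addr0, add0r); do 2!split => //.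
  by have := adm_mul cg ch; rewrite mulr1.
- right; rewrite g01 g10 h00 h11 !(mulr0, mul0r, addr0, add0r); do 2!split => //.
  by have := adm_mul cg ch; rewrite mul1r.
- right; rewrite g00 g11 h01 h10 !(mulr0, mul0r, addr0, add0r); do 2!split => //.
  by have := adm_mul cg (adm_swap ch); rewrite mulr1.
- left; rewrite g00 g11 h00 h11 !(mulr0, mul0r, addr0, add0r); do 2!split => //.
  by have := adm_mul cg (adm_swap ch); rewrite mulrNN mulr1.
Qed.

Lemma admissible_inv g : (0 < N)%N -> admissible_mx g -> admissible_mx (invmx g).
Proof.
move=> N_gt0; case=> [[g01 [g10 cg]] | [g00 [g11 cg]]].
  have /andP[x0 y0] := adm_neq0 N_gt0 (oner_neq0 K) cg.
  rewrite invmx_diag // /admissible_mx; have [-> -> -> ->] := mx2E (g 0 0)^-1 0 0 (g 1 1)^-1.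
  by left; do 2!split => //; have := adm_inv cg; rewrite invr1.
have N1_neq0 : -1 != 0 :> K by rewrite oppr_eq0 oner_eq0.
have /andP[x0 y0] := adm_neq0 N_gt0 N1_neq0 cg.
rewrite invmx_anti // /admissible_mx; have [-> -> -> ->] := mx2E 0 (g 1 0)^-1 (g 0 1)^-1 0.
by right; do 2!split => //; have := adm_inv (adm_swap cg); rewrite invrN1.
Qed.

End AdmissibleMatrices.

Section AlternatingBinomials.
Variable K : fieldType.

Definition skalt (r s : nat) : skA K := skmon K r s - skmon K s r.

Lemma skalt_coef r s p q :
  skcoef (skalt r s) p q = ((r == p) && (s == q))%:R - ((s == p) && (r == q))%:R.
Proof. by rewrite /skalt skcoefD skcoefN !skcoef_mon. Qed.

Lemma act_skalt_diag r s (g : 'M[K]_2) : r != s -> g 0 1 = 0 -> g 1 0 = 0 ->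
  g 0 0 ^+ r * g 1 1 ^+ s = 1 -> g 0 0 ^+ s * g 1 1 ^+ r = 1 ->
  act g (skalt r s) = skalt r s.
Proof.
move=> rs g01 g10 crs csr; apply: skA_ext => p q; rewrite act_diag // skalt_coef.
have sr : (s == r) = false by rewrite eq_sym (negbTE rs).
case: (boolP ((r == p) && (s == q))) => [/andP[/eqP <- /eqP <-] | h1].
  by rewrite ?eqxx ?sr ?(negbTE rs) /= crs subr0 mulr1.
case: (boolP ((s == p) && (r == q))) => [/andP[/eqP <- /eqP <-] | h2].
  by rewrite ?eqxx ?sr ?(negbTE rs) /= csr mul1r.
by rewrite /= subrr mulr0.
Qed.

Lemma act_skalt_anti r s (g : 'M[K]_2) : r != s -> g 0 0 = 0 -> g 1 1 = 0 ->
  g 1 0 ^+ s * g 0 1 ^+ r * (-1) ^+ (s * r) = -1 ->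
  g 1 0 ^+ r * g 0 1 ^+ s * (-1) ^+ (r * s) = -1 ->
  act g (skalt r s) = skalt r s.
Proof.
move=> rs g00 g11 crs csr; apply: skA_ext => p q; rewrite act_anti // !skalt_coef.
have sr : (s == r) = false by rewrite eq_sym (negbTE rs).
case: (boolP ((r == p) && (s == q))) => [/andP[/eqP <- /eqP <-] | h1].
  by rewrite ?eqxx ?sr ?(negbTE rs) /= crs sub0r mulrN1 opprK subr0.
case: (boolP ((s == p) && (r == q))) => [/andP[/eqP <- /eqP <-] | h2].
  by rewrite ?eqxx ?sr ?(negbTE rs) /= csr subr0 mulr1 sub0r.
rewrite [(r == q) && _]andbC [(s == q) && _]andbC.
by rewrite (negbTE h1) (negbTE h2) /= subrr mulr0.
Qed.

Lemma skalt_N0_invariant N r s (g : 'M[K]_2) : (0 < N)%N ->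
  admissible_mx N r s g -> act g (skalt N 0) = skalt N 0.
Proof.
move=> N_gt0 [[g01 [g10 [x1 y1 _ _]]] | [g00 [g11 [x1 y1 _ _]]]].
  by apply: act_skalt_diag; rewrite -?lt0n // ?x1 ?y1 ?expr0 ?mulr1 ?mul1r.
by apply: act_skalt_anti; rewrite -?lt0n // ?x1 ?y1 ?muln0 ?mul0n ?expr0 ?mulr1 ?mul1r.
Qed.

Lemma skalt_rs_invariant N r s (g : 'M[K]_2) : r != s -> odd r -> odd s ->
  admissible_mx N r s g -> act g (skalt r s) = skalt r s.
Proof.
move=> rs r_odd s_odd [[g01 [g10 [_ _ crs csr]]] | [g00 [g11 [_ _ crs csr]]]].
  exact: act_skalt_diag.
have sign_rs : (-1) ^+ (r * s) = -1 :> K by rewrite -signr_odd oddM r_odd s_odd.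
apply: act_skalt_anti; rewrite // ?[(s * r)%N]mulnC sign_rs mulrN1 ?[_ * g 0 1 ^+ _]mulrC.
  by rewrite crs.
by rewrite csr.
Qed.

End AlternatingBinomials.

Section RootsOfUnity.
Variable K : fieldType.

Lemma prim_root_half m (z : K) : (0 < m)%N -> (2 * m).-primitive_root z -> z ^+ m = -1.
Proof.
move=> m_gt0 hz; set x := z ^+ m.
have x2 : x ^+ 2 = 1 by rewrite -exprM mulnC (prim_expr_order hz).
have x_neq1 : x != 1.
  by rewrite -(prim_order_dvd hz); apply/negP => /(dvdn_leq m_gt0); lia.
move/eqP: (subr_sqr x 1); rewrite x2 expr1n subrr eq_sym mulf_eq0 subr_eq0 (negbTE x_neq1).
by rewrite addr_eq0 => /eqP.
Qed.

End RootsOfUnity.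

Section Generators.
Variables (K : fieldType) (n k : nat) (w : K).

Lemma genDE : [/\ genD n k w 0 0 = w ^+ (2 * k), genD n k w 0 1 = 0,
  genD n k w 1 0 = 0 & genD n k w 1 1 = (w ^+ (2 * k))^-1].
Proof. by rewrite !mxE. Qed.

Lemma genTE : [/\ genT n k w 0 0 = 0, genT n k w 0 1 = w ^+ n,
  genT n k w 1 0 = w ^+ n & genT n k w 1 1 = 0].
Proof. by rewrite !mxE. Qed.

End Generators.

Section EvenCase.
Variables (K : fieldType) (n k : nat) (w : K).
Hypotheses (n_gt0 : (0 < n)%N) (k_gt0 : (0 < k)%N) (hw : (2 * n * k).-primitive_root w).

(* For even n, invariance under diag(l, l^-1) with l = w^(2k) a primitive n-th
   root of unity forces p = q mod n, hence mod 2, on every monomial u^p v^q. *)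
Lemma invariant_balanced_even_n a : ~~ odd n -> Defs.invariant n k w a -> balanced a.
Proof.
move=> n_even Ha p q apq; have [D00 D01 D10 D11] := genDE n k w.
have := f_equal (fun x => skcoef x p q) (Ha _ (inGD n k w)).
rewrite /= act_diag // D00 D11 -[X in _ = X]mul1r => /(mulIf apq).
rewrite exprVn => /divr1_eq /eqP; rewrite -!exprM (eq_prim_root_expr hw).
rewrite [(2 * n * k)%N]mulnAC -!muln_modr eqn_pmul2l ?muln_gt0 // => /eqP pq_mod_n.
have two_dvd_n : (2 %| n)%N by rewrite dvdn2.
have : (p %% 2 = q %% 2)%N.
  by rewrite -(modn_dvdm p two_dvd_n) -(modn_dvdm q two_dvd_n) pq_mod_n.
by rewrite !modn2 => /(congr1 odd); rewrite !oddb.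
Qed.

(* For even k, applying the antidiagonal generator T twice to the coefficient
   of u^p v^q gives w^(2n(p+q)) = 1, so k divides p + q, which is then even. *)
Lemma invariant_balanced_even_k a : ~~ odd k -> Defs.invariant n k w a -> balanced a.
Proof.
move=> k_even Ha p q apq; have [T00 T01 T10 T11] := genTE n k w.
have coefT i j := f_equal (fun x => skcoef x i j) (Ha _ (inGT n k w)).
have := coefT p q; rewrite /= act_anti // T01 T10 -(coefT q p) /= act_anti // T01 T10.
rewrite mulrA -[X in _ = X]mul1r => /(mulIf apq).
have -> : w ^+ n ^+ q * w ^+ n ^+ p * (-1) ^+ (q * p) *
    (w ^+ n ^+ p * w ^+ n ^+ q * (-1) ^+ (p * q)) = w ^+ (2 * n * (p + q)).
  transitivity ((w ^+ n ^+ (p + q)) ^+ 2 * ((-1) ^+ (p * q)) ^+ 2).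
    by rewrite [(q * p)%N]mulnC exprD; ring.
  by rewrite sqrr_sign mulr1 -!exprM; congr (w ^+ _); lia.
move/eqP; rewrite -(prim_order_dvd hw) dvdn_pmul2l ?muln_gt0 // => k_dvd_pq.
have : (2 %| p + q)%N by apply: dvdn_trans k_dvd_pq; rewrite dvdn2.
by rewrite dvdn2 oddD; case: (odd p); case: (odd q).
Qed.

Lemma even_invariants_commute : ~~ odd n \/ ~~ odd k -> invariant_ring_commutative n k w.
Proof.
move=> nk_even a b Ha Hb; have bal c : Defs.invariant n k w c -> balanced c.
  by case: nk_even => par; [apply: invariant_balanced_even_n | apply: invariant_balanced_even_k].
by apply: balanced_comm; apply: bal.
Qed.

End EvenCase.

(* The exponents s = n(2k-1) and r = n(2k+1) of the second invariant
   u^r v^s - u^s v^r used when n and k are odd; r - s = 2n and r + s = 4nk. *)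
Section Exponents.
Variables n k : nat.

Definition expS := (n * (2 * k.-1).+1)%N.
Definition expR := (expS + 2 * n)%N.

Lemma expS_odd : odd n -> odd expS.
Proof. by move=> n_odd; rewrite /expS oddM n_odd /= oddM. Qed.

Lemma expR_odd : odd n -> odd expR.
Proof. by move=> n_odd; rewrite /expR oddD expS_odd // oddM. Qed.

Lemma expR_neq_expS : (0 < n)%N -> expR != expS.
Proof. by move=> n_gt0; rewrite /expR; apply/eqP; lia. Qed.

Lemma expR_add_expS : (0 < k)%N -> (expR + expS = 2 * n * k * 2)%N.
Proof. by move=> k_gt0; rewrite /expR /expS; nia. Qed.

End Exponents.

Section OddCase.
Variables (K : fieldType) (n k : nat) (w : K).
Hypotheses (n_gt0 : (0 < n)%N) (k_gt0 : (0 < k)%N) (hw : (2 * n * k).-primitive_root w).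
Hypotheses (n_odd : odd n) (k_odd : odd k).

Lemma w_order_dvd e : (2 * n * k %| e)%N -> w ^+ e = 1.
Proof. by rewrite (prim_order_dvd hw) => /eqP. Qed.

Lemma genD_admissible : admissible_mx (n * k) (expR n k) (expS n k) (genD n k w).
Proof.
rewrite /admissible_mx; have [-> -> -> ->] := genDE n k w; left; do 2!split => //.
set l := w ^+ (2 * k).
have l_order e : (n %| e)%N -> l ^+ e = 1.
  by move=> /dvdnP[c ->]; rewrite /l -exprM w_order_dvd //; apply/dvdnP; exists c; ring.
have n_dvd_S : (n %| expS n k)%N by rewrite dvdn_mulr.
have n_dvd_R : (n %| expR n k)%N by rewrite dvdn_add // dvdn_mull.
by split; rewrite ?exprVn !l_order ?invr1 ?mulr1 // dvdn_mulr.
Qed.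

Lemma genT_admissible : admissible_mx (n * k) (expR n k) (expS n k) (genT n k w).
Proof.
rewrite /admissible_mx; have [-> -> -> ->] := genTE n k w; right; do 2!split => //.
have wnk : w ^+ n ^+ (n * k) = -1.
  have hw' : (2 * (n * k)).-primitive_root w by rewrite mulnA.
  by rewrite -exprM mulnC exprM (prim_root_half _ hw') ?muln_gt0 ?n_gt0 // -signr_odd n_odd.
by split => //; rewrite -exprD ?[(expS n k + _)%N]addnC (expR_add_expS _ k_gt0)
  -exprM w_order_dvd // dvdn_mull // dvdn_mulr.
Qed.

Lemma inG_admissible g : inG n k w g -> admissible_mx (n * k) (expR n k) (expS n k) g.
Proof.
elim=> [||| g1 g2 _ adm1 _ adm2 | g1 _ adm1].
- exact: admissible1.
- exact: genD_admissible.
- exact: genT_admissible.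
- exact: admissible_mul.
- by apply: admissible_inv; rewrite ?muln_gt0 ?n_gt0.
Qed.

Local Notation invA := (skalt K (n * k) 0).
Local Notation invB := (skalt K (expR n k) (expS n k)).

Lemma invA_invariant : Defs.invariant n k w invA.
Proof. by move=> g /inG_admissible; apply: skalt_N0_invariant; rewrite muln_gt0 n_gt0. Qed.

Lemma invB_invariant : Defs.invariant n k w invB.
Proof.
move=> g /inG_admissible; apply: skalt_rs_invariant.
- exact: expR_neq_expS.
- exact: expR_odd.
- exact: expS_odd.
Qed.

(* In fh - hf the monomial u^(nk+r) v^s has coefficient
   1 - (-1)^(s nk) = 2, since s and nk are odd. *)
Lemma invA_invB_noncomm : (2%:R : K) != 0 -> skmul invA invB != skmul invB invA.
Proof.
move=> two_neq0; apply/eqP => /(f_equal (fun x => skcoef x (n * k + expR n k) (expS n k))).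
rewrite /skalt /= !(skmulDl, skmulDr, skmulNl, skmulNr, skmul_mon).
rewrite !(skcoefD, skcoefN, skcoef_scale, skcoef_mon) !(add0n, addn0, mul0n, muln0, expr0).
have nk_gt0 : (0 < n * k)%N by rewrite muln_gt0 n_gt0.
have -> : (expR n k == (expS n k)) = false by apply/negbTE; exact: expR_neq_expS.
have -> : (expR n k == n * k + expR n k)%N = false by apply/eqP; lia.
have -> : (expS n k == n * k + expR n k)%N = false by apply/eqP; rewrite /expR; lia.
rewrite [(expR n k + n * k)%N]addnC !eqxx /= andbF /=.
rewrite (_ : (-1) ^+ (expS n k * (n * k)) = -1 :> K); last first.
  by rewrite -signr_odd oddM (expS_odd _ n_odd) oddM n_odd k_odd.
rewrite andbF !(mulr0, mul1r, mulr1, subr0, oppr0, addr0) => /eqP.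
by rewrite -subr_eq0 opprK (_ : 1 + 1 = 2%:R) // (negbTE two_neq0).
Qed.

End OddCase.

Theorem mainTheorem8 (K : closedFieldType) (charK0 : [pchar K] =i pred0)
  (n k : nat) (w : K) (hn : (0 < n)%N) (hk : (0 < k)%N)
  (hcop : coprime n k) (hk4 : (k %% 4 != 2)%N)
  (hw : (2 * n * k).-primitive_root w) :
  invariant_ring_commutative n k w <-> (~~ odd n \/ ~~ odd k).
Proof.
split; last exact: even_invariants_commute.
move=> comm; case: (boolP (odd n)) => [n_odd|]; last by left.
case: (boolP (odd k)) => [k_odd|]; last by right.
have two_neq0 : (2%:R : K) != 0 by rewrite ((pcharf0P K).1 charK0).
case/eqP: (invA_invB_noncomm hn hk hw n_odd k_odd two_neq0).
by apply: comm; [apply: invA_invariant | apply: invB_invariant].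
Qed.
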